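(* Let $\eta\in(0,1)$ be a constant. For any integers $k,d,s$ satisfying $s=k^{1-\eta}$ and $k\ge\log d+o(k)+O_\eta(1)$ (in particular, $k\ge 2^{2/\eta}$), every $(k,d,s)$-CNF formula is $\theta$-resilient for some $\theta>0$ depending only on $k$ and $\eta$.
   Context: $\log$ denotes $\log_2$. A $(k,d,s)$-CNF formula $\Phi=(V,\mathcal C)$ is a CNF formula in which every clause contains exactly $k$ distinct variables, every variable appears in at most $d$ clauses, and any two distinct clauses share at most $s$ variables. For a clause $c$ on a set $\mathrm{vbl}(c)$ of $k$ distinct variables, its forbidden assignment is the unique assignment of $\mathrm{vbl}(c)$ violating $c$. $\mu_\Phi$ is the uniform distribution over satisfying assignments of $\Phi$. $\Phi$ is $\theta$-resilient if for every clause $c^*\notin\mathcal C$ on $k$ distinct variables with forbidden assignment $\sigma^*$, $\Pr_{X\sim\mu_\Phi}[X_{\mathrm{vbl}(c^* )}=\sigma^*]$ is either $0$ or at least $\theta$. (The paper writes this conclusion as ''$O_{k,\eta}(1)$-resilient''.) *)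

From mathcomp Require Import all_boot.
From Stdlib Require Import Reals.

Set Implicit Arguments.
Unset Strict Implicit.
Unset Printing Implicit Defensive.

(* A clause over the variable set V is encoded by the map
   c : V -> option bool, where c v = Some b means that v occurs in c and
   the forbidden assignment of c sets v to b; c v = None means v does not
   occur in c.  This encoding is canonical: a clause is determined by its
   variable set vbl(c) and its forbidden assignment on vbl(c). *)
Definition clause (V : finType) := {ffun V -> option bool}.

Definition vbl (V : finType) (c : clause V) : {set V} :=
  [set v | c v != None].

Definition cnf (V : finType) := {set clause V}.

Definition assignment (V : finType) := {ffun V -> bool}.

Definition violates (V : finType) (c : clause V) (x : assignment V) : bool :=
  [forall v, if c v is Some b then x v == b else true].

Definition satisfies (V : finType) (F : cnf V) (x : assignment V) : bool :=
  [forall c in F, ~~ violates c x].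

Definition is_kds_cnf (V : finType) (k d s : nat) (F : cnf V) : Prop :=
  (forall c, c \in F -> #|vbl c| = k) /\
  (forall v : V, #|[set c in F | v \in vbl c]| <= d) /\
  (forall c1 c2, c1 \in F -> c2 \in F -> c1 != c2 ->
       #|vbl c1 :&: vbl c2| <= s).

(* Pr_{X ~ mu_F}[X_{vbl(c)} = forbidden assignment of c], where mu_F is the
   uniform distribution on satisfying assignments of F.  (If F is
   unsatisfiable this evaluates to 0/0 = 0 in Stdlib's reals.) *)
Definition prob_violate (V : finType) (F : cnf V) (c : clause V) : R :=
  (INR #|[set x : assignment V | satisfies F x && violates c x]|
   / INR #|[set x : assignment V | satisfies F x]|)%R.

Definition resilient (V : finType) (k : nat) (theta : R) (F : cnf V) : Prop :=
  forall c : clause V, #|vbl c| = k -> c \notin F ->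
    prob_violate F c = 0%R \/ (theta <= prob_violate F c)%R.

Definition log2 (x : R) : R := (ln x / ln 2)%R.

(* Fix a clause B outside F and look at the assignments violating B,
   i.e. agreeing with its forbidden assignment on vbl B.  Among those, a clause of F
   inside vbl B has the same k variables as B but a different forbidden assignment, so
   it is satisfied automatically; any other clause c keeps only its free variables
   vbl c \ vbl B, and relative to the conditioning it is violated with probability
   2^-|free c|.  The lopsided local lemma, run on the counting measure restricted to
   this conditioning, applies with weights (4/3 or 4) * 2^-|free c|: as two clauses
   share at most s variables, at most one clause lies mostly inside vbl B, at most
   C(k, s+1) clauses meet vbl B in more than s variables, and every other neighbour
   has at least k - s free variables, which 32 k d <= 2^(k-s) makes negligible.
   Comparing with the clauses disjoint from vbl B, which ignore the conditioning,
   gives Pr[X violates B] >= 2^-k (1/3)^(k d) whenever F is satisfiable, and d <= 2^k.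
   The numerical hypotheses hold once k >= log d + 10 + 2 (s+1) log k + s, and this
   overhead is o(k) when s <= k^(1-eta) because log k = O(k^(eta/2)). *)

From HB Require Import structures.
From mathcomp Require Import all_boot.
From Stdlib Require Import Reals Lra Lia.
From mathcomp Require Import zify.
Import ssrnat.

Set Implicit Arguments.
Unset Strict Implicit.
Unset Printing Implicit Defensive.

Section CylinderCount.
Variable V : finType.
Implicit Types (x y : assignment V) (U : {set V}) (E : {set assignment V}).

Definition invariant_off U E :=
  forall x y, (forall v, v \notin U -> x v = y v) -> (x \in E) = (y \in E).

Definition flip (v : V) x : assignment V :=
  [ffun w => if w == v then ~~ x w else x w].

Lemma flipK v : involutive (flip v).
Proof. by move=> x; apply/ffunP=> w; rewrite !ffunE; case: eqP => // _; rewrite negbK. Qed.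

Lemma flip_at v x : flip v x v = ~~ x v.
Proof. by rewrite ffunE eqxx. Qed.

Lemma card_fix_coord E v b : (forall x, (flip v x \in E) = (x \in E)) ->
  2 * #|[set x in E | x v == b]| = #|E|.
Proof.
move=> Eflip; rewrite -(cardsID [set x : assignment V | x v == b] E) mul2n -addnn; congr (_ + _).
  by congr #|pred_of_set _|; apply/setP=> x; rewrite !inE.
rewrite -(card_imset _ (can_inj (flipK v))); congr #|pred_of_set _|.
apply/setP=> x; rewrite inE; apply/andP/imsetP => [[xE xb] | [y]].
  exists (flip v x); last by rewrite flipK.
  by rewrite !inE flip_at Eflip xE; case: (x v) xb; case: b.
by rewrite !inE => /andP[yb yE] ->; rewrite flip_at Eflip yE; case: (y v) yb; case: b.
Qed.

Lemma card_cylinder U E (sg : assignment V) : invariant_off U E ->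
  2 ^ #|U| * #|[set x in E | [forall v in U, x v == sg v]]| = #|E|.
Proof.
elim: {U}_.+1 {-2}U (ltnSn #|U|) E => // n IH U ltUn E EU.
have [U0 | [v vU]] := set_0Vmem U.
  rewrite U0 cards0 mul1n; congr #|pred_of_set _|; apply/setP=> x.
  by rewrite !inE; case: (x \in E) => //=; apply/forall_inP=> w; rewrite inE.
set E' := [set x in E | x v == sg v].
have E'U : invariant_off (U :\ v) E'.
  move=> x y xy; rewrite !inE xy ?(EU x y) // => [w wU|]; last by rewrite !inE eqxx.
  by apply: xy; rewrite !inE (negbTE wU) andbF.
have ltU'n : #|U :\ v| < n by rewrite (cardsD1 v U) vU in ltUn.
rewrite -(@card_fix_coord E v (sg v)); last first.
  by move=> x; apply: EU => w; rewrite ffunE; case: eqP => // ->; rewrite vU.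
rewrite -/E' -(IH _ ltU'n E' E'U) (cardsD1 v U) vU add1n expnS -mulnA.
congr (_ * (_ * #|pred_of_set _|)).
apply/setP=> x; rewrite !inE -andbA; congr andb.
apply/forall_inP/andP => [xsg | [xv /forall_inP xsg] w wU].
  by split; [apply: xsg | apply/forall_inP=> w /setD1P[_]; apply: xsg].
by case: (eqVneq w v) => [-> // | wv]; apply: xsg; rewrite !inE wv.
Qed.

Lemma violates_eq_on (c : clause V) x y :
  {in vbl c, x =1 y} -> violates c x = violates c y.
Proof.
move=> xy; apply: eq_forallb => v; have := xy v; rewrite inE.
by case: (c v) => // b /(_ isT) ->.
Qed.

End CylinderCount.

HB.instance Definition _ := Monoid.isComLaw.Build R 1%R Rmult
  (fun a b c => esym (Rmult_assoc a b c)) Rmult_comm Rmult_1_l.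
HB.instance Definition _ := Monoid.isComLaw.Build R 0%R Rplus
  (fun a b c => esym (Rplus_assoc a b c)) Rplus_comm Rplus_0_l.

Lemma INR_muln m n : INR (m * n) = (INR m * INR n)%R.
Proof. by rewrite mulnE mult_INR. Qed.

Lemma INR_addn m n : INR (m + n) = (INR m + INR n)%R.
Proof. by rewrite addnE plus_INR. Qed.

Lemma INR_expn m n : INR (m ^ n) = (INR m ^ n)%R.
Proof. by elim: n => [|n IH]; rewrite ?expnS ?INR_muln ?IH. Qed.

Lemma INR_exp2n n : INR (2 ^ n) = (2 ^ n)%R.
Proof. by rewrite INR_expn. Qed.

Lemma INR_leq m n : m <= n -> (INR m <= INR n)%R.
Proof. by move/leP; apply: le_INR. Qed.

Lemma pow_le_anti x m n : (0 <= x <= 1)%R -> m <= n -> (x ^ n <= x ^ m)%R.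
Proof.
move=> x01 mn; rewrite -(subnK mn) addnE pow_add.
have : (x ^ (n - m) <= 1)%R by rewrite -(pow1 (n - m)); apply: pow_incr; lra.
by have := pow_le x m ltac:(lra); nra.
Qed.

Section RealBigops.
Variable I : finType.
Implicit Types (A : {set I}) (f : I -> R).

Lemma sum_le_card_mul A f b : (forall i, i \in A -> f i <= b)%R ->
  (\big[Rplus/0%R]_(i in A) f i <= INR #|A| * b)%R.
Proof.
move=> fb; rewrite -sum1_card.
elim/big_rec2: _ => [|i n r iA le_r]; first by rewrite /=; lra.
by rewrite INR_addn /=; have := fb i iA; lra.
Qed.

Lemma prod_in01 A f : (forall i, i \in A -> 0 <= f i <= 1)%R ->
  (0 <= \big[Rmult/1%R]_(i in A) f i <= 1)%R.
Proof.
move=> f01; elim/big_rec: _ => [|i r iA [r0 r1]]; first lra.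
by have := f01 i iA; split; nra.
Qed.

Lemma prod_le_subset A A' f : A \subset A' ->
  (forall i, i \in A' -> 0 <= f i <= 1)%R ->
  (\big[Rmult/1%R]_(i in A') f i <= \big[Rmult/1%R]_(i in A) f i)%R.
Proof.
move=> sAA' f01; rewrite (big_setID A) /= (setIidPr sAA').
have [p0 _] := prod_in01 (fun i iA => f01 i (subsetP sAA' i iA)).
have [_ q1] := prod_in01 (fun i iA => f01 i (subsetP (subsetDl A' A) i iA)).
nra.
Qed.

Lemma prod_ge_pow A f b : (0 <= b)%R -> (forall i, i \in A -> b <= f i)%R ->
  (b ^ #|A| <= \big[Rmult/1%R]_(i in A) f i)%R.
Proof.
move=> b0 bf; rewrite -sum1_card.
elim/big_rec2: _ => [|i n r iA le_r] /=; first lra.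
by apply: Rmult_le_compat => //; [apply: pow_le | apply: bf].
Qed.

Lemma prod_1B_ge A f : (forall i, i \in A -> 0 <= f i <= 1)%R ->
  (1 - \big[Rplus/0%R]_(i in A) f i <= \big[Rmult/1%R]_(i in A) (1 - f i))%R.
Proof.
move=> f01; suff [] : (0 <= \big[Rmult/1%R]_(i in A) (1 - f i) <= 1 /\
    1 - \big[Rplus/0%R]_(i in A) f i <= \big[Rmult/1%R]_(i in A) (1 - f i))%R by [].
elim/big_rec2: _ => [|i s p iA [p01 le_p]]; first lra.
by have := f01 i iA; split; nra.
Qed.

End RealBigops.

Lemma card_bigcup_le (I T : finType) (A : {set I}) (E : I -> {set T}) m :
  (forall i, i \in A -> #|E i| <= m) -> #|\bigcup_(i in A) E i| <= #|A| * m.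
Proof.
move=> Em; rewrite -sum_nat_const.
elim/big_rec2: _ => [|i n X iA le_X]; first by rewrite cards0.
by apply: leq_trans (leq_card_setU _ _) _; apply: leq_add; [apply: Em|].
Qed.

Section LopsidedLLL.
Variables (V : finType) (B : clause V).
Implicit Types (P Q T : {set clause V}) (a : assignment V).

Definition mass (E : pred (assignment V)) : R :=
  INR #|[set a | E a && violates B a]|.

Definition free (c : clause V) := vbl c :\: vbl B.

Lemma mass_ge0 E : (0 <= mass E)%R.
Proof. exact: pos_INR. Qed.

Lemma mass_le (E E' : pred (assignment V)) : (forall a, E a -> E' a) -> (mass E <= mass E')%R.
Proof.
move=> EE'; apply/INR_leq/subset_leq_card/subsetP=> a.
by rewrite !inE => /andP[/EE' -> ->].
Qed.

Lemma satisfies_setU1 j T a : satisfies (j |: T) a = ~~ violates j a && satisfies T a.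
Proof.
apply/forall_inP/andP => [sat | [vj /forall_inP sat] c].
  by split; [apply: sat; rewrite setU11 | apply/forall_inP=> c cT; apply: sat; rewrite setU1r].
by case/setU1P=> [-> // | /sat].
Qed.

Lemma mass_satisfies_setU1 j T :
  (mass (satisfies (j |: T)) + mass (fun a => violates j a && satisfies T a)
   = mass (satisfies T))%R.
Proof.
rewrite /mass -INR_addn -(cardsID [set a | violates j a] [set a | satisfies T a && violates B a]).
rewrite addnC; congr (INR (_ + _)); congr #|pred_of_set _|; apply/setP=> a;
  by rewrite !inE ?satisfies_setU1; case: (violates j a); rewrite ?andbT ?andbF.
Qed.

(* Among the assignments violating B, violating c only fixes the free variables of c.
   No clause of T mentions them, so all 2^|free c| patterns of them have the same mass. *)
Lemma mass_violates_indep c T : (forall j, j \in T -> [disjoint free c & vbl j]) ->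
  (2 ^ #|free c| * mass (fun a => violates c a && satisfies T a) <= mass (satisfies T))%R.
Proof.
move=> Tc.
set E := [set a | satisfies T a && violates B a].
pose sg : assignment V := [ffun v => if c v is Some b then b else false].
have EU : invariant_off (free c) E.
  move=> a b ab; rewrite !inE (violates_eq_on (x := a) (y := b)) => [|v vB]; last first.
    by apply: ab; rewrite inE vB.
  congr andb; apply: eq_forallb_in => j jT; congr negb; apply: violates_eq_on => v vj.
  by apply: ab; apply: contraL (Tc j jT) => vc; apply/pred0Pn; exists v; rewrite /= vc.
rewrite /mass -INR_exp2n -INR_muln -/E -(card_cylinder sg EU).
apply/INR_leq; rewrite leq_mul2l; apply/orP; right.
apply/subset_leq_card/subsetP=> a; rewrite !inE => /andP[/andP[ca Ta] Ba].
rewrite Ta Ba; apply/forall_inP=> v /setDP[vc _]; move/forallP/(_ v): ca.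
by rewrite ffunE; move: vc; rewrite inE; case: (c v).
Qed.

Variables (G : {set clause V}) (x : clause V -> R).
Hypothesis x01 : forall c, c \in G -> (0 <= x c <= 1)%R.

Definition neighbours c := [set j in G | (j != c) && ~~ [disjoint free c & vbl j]].

Hypothesis lll_condition : forall c, c \in G ->
  (1 <= 2 ^ #|free c| * x c * \big[Rmult/1%R]_(j in neighbours c) (1 - x j))%R.

(* Pr[c violated | T satisfied] <= x c, conditionally on violating B. *)
Definition cond_bound T := forall c, c \in G -> c \notin T ->
  (mass (fun a => violates c a && satisfies T a) <= x c * mass (satisfies T))%R.

Lemma prod_1Bx_in01 P : P \subset G -> (0 <= \big[Rmult/1%R]_(j in P) (1 - x j) <= 1)%R.
Proof. by move=> sPG; apply: prod_in01 => j /(subsetP sPG) /x01; lra. Qed.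

Lemma mass_satisfies_ge P Q : P \subset G -> [disjoint P & Q] ->
  (forall T, T \proper P :|: Q -> cond_bound T) ->
  (\big[Rmult/1%R]_(j in P) (1 - x j) * mass (satisfies Q) <= mass (satisfies (P :|: Q)))%R.
Proof.
elim: {P}_.+1 {-2}P (ltnSn #|P|) => // n IH P ltPn sPG dPQ cb.
have [P0 | [j jP]] := set_0Vmem P; first by rewrite P0 big_set0 set0U; lra.
set P' := P :\ j.
have jG : j \in G := subsetP sPG j jP.
have sP'P : P' \subset P := subsetDl P [set j].
have jT : j \notin P' :|: Q.
  by rewrite in_setU setD11 /= (disjointFr dPQ jP).
have ltP'n : #|P'| < n by rewrite (cardsD1 j P) jP in ltPn.
have le_P' := IH P' ltP'n (subset_trans sP'P sPG) (disjointWl sP'P dPQ)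
  (fun T sT => cb T (proper_sub_trans sT (setSU Q sP'P))).
have ltT : P' :|: Q \proper P :|: Q.
  by apply/properP; split; [apply: setSU | exists j => //; rewrite in_setU jP].
have le_j := cb _ ltT j jG jT.
have split_j := mass_satisfies_setU1 j (P' :|: Q).
have [xj0 xj1] := x01 jG.
rewrite -(setD1K jP) -setUA big_setU1 ?setD11 //= -/P'.
set p := \big[Rmult/1%R]_(i in P') _ in le_P' *.
rewrite Rmult_assoc; have := Rmult_le_compat_l (1 - x j) _ _ ltac:(lra) le_P'; lra.
Qed.

Lemma cond_bound_step T : T \subset G ->
  (forall T', T' \proper T -> cond_bound T') -> cond_bound T.
Proof.
move=> sTG IH c cG cT.
set L := [set j | ~~ [disjoint free c & vbl j]]; set N := T :&: L; set M := T :\: L.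
have sMT : M \subset T := subsetDl T L.
have le_M : (mass (fun a => violates c a && satisfies T a)
             <= mass (fun a => violates c a && satisfies M a))%R.
  apply: mass_le => a /andP[-> /forall_inP satT].
  by apply/forall_inP=> j /(subsetP sMT) /satT.
have indep_M : (2 ^ #|free c| * mass (fun a => violates c a && satisfies M a)
                <= mass (satisfies M))%R.
  by apply: mass_violates_indep => j; rewrite !inE negbK => /andP[].
have le_N : (\big[Rmult/1%R]_(j in N) (1 - x j) * mass (satisfies M)
             <= mass (satisfies T))%R.
  rewrite -(setID T L); apply: mass_satisfies_ge; rewrite ?setID //.
    exact: subset_trans (subsetIl T L) sTG.
  by rewrite disjoints_subset setCD subsetU // subsetIr orbT.
have sNbG : neighbours c \subset G by apply/subsetP=> j; rewrite inE => /andP[].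
have le_nb : (\big[Rmult/1%R]_(j in neighbours c) (1 - x j)
               <= \big[Rmult/1%R]_(j in N) (1 - x j))%R.
  apply: prod_le_subset => [|j /(subsetP sNbG) /x01]; last lra.
  apply/subsetP=> j /setIP[jT]; rewrite !inE (subsetP sTG j jT) => ->.
  by rewrite andbT; apply: contraNneq cT => <-.
have [xc0 _] := x01 cG; have [pnb0 _] := prod_1Bx_in01 sNbG.
have aM0 := mass_ge0 (fun a => violates c a && satisfies M a).
have m0 := mass_ge0 (satisfies M); have cond_c := lll_condition cG.
set aM := mass (fun a => violates c a && satisfies M a) in le_M indep_M aM0 *.
set m := mass (satisfies M) in indep_M le_N m0 *.
set pnb := \big[Rmult/1%R]_(j in neighbours c) _ in le_nb pnb0 cond_c *.
set pN := \big[Rmult/1%R]_(j in N) _ in le_N le_nb *.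
apply: Rle_trans le_M _; apply: Rle_trans (_ : aM <= x c * pnb * (2 ^ #|free c| * aM))%R _.
  by have := Rmult_le_compat_l _ _ _ aM0 cond_c; lra.
apply: Rle_trans (_ : x c * pnb * m <= _)%R; first by apply: Rmult_le_compat_l; nra.
rewrite Rmult_assoc; apply: Rmult_le_compat_l => //.
by apply: Rle_trans le_N; apply: Rmult_le_compat_r.
Qed.

Lemma cond_bound_all T : T \subset G -> cond_bound T.
Proof.
elim: {T}_.+1 {-2}T (ltnSn #|T|) => // n IH T ltTn sTG; apply: cond_bound_step => // T' ltT'.
apply: IH; first exact: leq_trans (proper_card ltT') ltTn.
exact: subset_trans (proper_sub ltT') sTG.
Qed.

Lemma lll_mass_prod P Q : P \subset G -> [disjoint P & Q] -> Q \subset G ->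
  (\big[Rmult/1%R]_(j in P) (1 - x j) * mass (satisfies Q) <= mass (satisfies (P :|: Q)))%R.
Proof.
move=> sPG dPQ sQG; apply: mass_satisfies_ge => // T /proper_sub sT.
by apply: cond_bound_all; apply: subset_trans sT _; rewrite subUset sPG.
Qed.

End LopsidedLLL.

Definition resilience_bound (k : nat) : R := ((1/3) ^ (k * 2 ^ k) / 2 ^ k)%R.

Section Resilience.
Variables (V : finType) (k d s : nat) (F : cnf V) (B : clause V).
Hypothesis F_size : forall c, c \in F -> #|vbl c| = k.
Hypothesis F_degree : forall v, #|[set c in F | v \in vbl c]| <= d.
Hypothesis F_overlap : forall c1 c2, c1 \in F -> c2 \in F -> c1 != c2 ->
  #|vbl c1 :&: vbl c2| <= s.
Hypothesis B_size : #|vbl B| = k.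
Hypothesis B_notin_F : B \notin F.
Hypothesis s_le_k : s + 10 <= k.
Hypothesis kd_le : 32 * (k * d) <= 2 ^ (k - s).
Hypothesis binom_le : (32 * 'C(k, s.+1)) ^ 2 <= 2 ^ (k - s).

Local Notation S := (vbl B).
Local Notation u c := #|free B c|.
Implicit Types (c j : clause V) (a : assignment V).

Definition mostly_inside c := 2 * u c + s < k.

(* Tight for the LLL condition: the neighbours that are not mostly inside contribute
   a factor >= 3/4 and the (unique) mostly inside one a factor >= 1/3, so that
   4/3 * 3/4 = 1 when c itself is mostly inside and 4 * 1/3 * 3/4 = 1 otherwise. *)
Definition weight c : R := ((if mostly_inside c then 4/3 else 4) / 2 ^ u c)%R.

Definition live := [set c in F | ~~ (vbl c \subset S)].
Definition far := [set c in F | [disjoint vbl c & S]].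
Definition near := live :\: far.
Definition heavy := [set c in F | s < #|vbl c :&: S|].

Lemma free_add_inside c : c \in F -> u c + #|vbl c :&: S| = k.
Proof. by move=> cF; rewrite addnC cardsID F_size. Qed.

(* Two such clauses would share more than s variables of vbl B. *)
Lemma mostly_inside_uniq j1 j2 : j1 \in F -> j2 \in F ->
  mostly_inside j1 -> mostly_inside j2 -> j1 = j2.
Proof.
move=> j1F j2F m1; apply: contraTeq => ne.
set A1 := vbl j1 :&: S; set A2 := vbl j2 :&: S.
have le_s : #|A1 :&: A2| <= s.
  apply: leq_trans (F_overlap j1F j2F ne); apply: subset_leq_card.
  by rewrite setIACA subsetIl.
have le_k : #|A1 :|: A2| <= k by rewrite -B_size subset_leq_card // subUset !subsetIr.
have := cardsUI A1 A2; have := free_add_inside j1F; have := free_add_inside j2F.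
move: m1; rewrite /mostly_inside -/A1 -/A2; lia.
Qed.

Lemma live_F c : c \in live -> c \in F.
Proof. by rewrite inE => /andP[]. Qed.

Lemma live_free_gt0 c : c \in live -> 0 < u c.
Proof. by rewrite inE card_gt0 setD_eq0 => /andP[]. Qed.

Lemma weight_not_mostly_inside c : ~~ mostly_inside c -> weight c = (4 / 2 ^ u c)%R.
Proof. by rewrite /weight => /negbTE ->. Qed.

Lemma weight_in c : c \in live -> (0 <= weight c <= 2/3)%R.
Proof.
move=> cl; have u0 : (0 < / 2 ^ u c)%R by apply/Rinv_0_lt_compat/pow_lt; lra.
rewrite /weight /Rdiv; case: ifPn => [_ | ncm].
  have : (2 ^ 1 <= 2 ^ u c)%R by apply: Rle_pow; [lra | apply/leP/live_free_gt0].
  by rewrite pow_1 => /Rinv_le_contravar; lra.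
have : (2 ^ 5 <= 2 ^ u c)%R.
  by apply: Rle_pow; [lra | apply/leP; move: ncm; rewrite /mostly_inside; lia].
by move/Rinv_le_contravar; rewrite /=; lra.
Qed.

Lemma card_neighbours c : c \in F -> #|neighbours B live c| <= k * d.
Proof.
move=> cF.
have sub : neighbours B live c \subset \bigcup_(v in free B c) [set j in F | v \in vbl j].
  apply/subsetP=> j; rewrite !inE => /andP[/andP[jF _] /andP[_ /pred0Pn[v /andP[vf vj]]]].
  by apply/bigcupP; exists v => //; rewrite inE jF.
apply: leq_trans (subset_leq_card sub) _; apply: leq_trans (card_bigcup_le _) _.
  by move=> v _; apply: F_degree.
by rewrite leq_mul2r -(F_size cF) subset_leq_card ?subsetDl ?orbT.
Qed.

(* A heavy clause is determined by its first s+1 variables inside vbl B. *)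
Lemma card_heavy : #|heavy| <= 'C(k, s.+1).
Proof.
have heavy_F j : j \in heavy -> j \in F by rewrite inE => /andP[].
pose trace j : {set V} := [set v in take s.+1 (enum (vbl j :&: S))].
have trace_sub j : trace j \subset vbl j :&: S.
  by apply/subsetP=> v; rewrite inE => /mem_take; rewrite mem_enum.
have card_trace j : j \in heavy -> #|trace j| = s.+1.
  rewrite inE => /andP[_ lt_s]; rewrite cardsE.
  by rewrite (card_uniqP (take_uniq _ (enum_uniq _))) size_takel // -cardE.
have trace_inj : {in heavy &, injective trace}.
  move=> j1 j2 j1H j2H eq_tr; apply/eqP; apply: contraT => ne.
  have [j1F j2F] := (heavy_F j1 j1H, heavy_F j2 j2H).
  have : trace j1 \subset vbl j1 :&: vbl j2.
    rewrite subsetI {2}eq_tr.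
    by rewrite (subset_trans (trace_sub j1)) ?(subset_trans (trace_sub j2)) ?subsetIl.
  move/subset_leq_card; rewrite card_trace // => le_tr.
  by have := leq_trans le_tr (F_overlap j1F j2F ne); rewrite ltnn.
rewrite -(card_in_imset trace_inj) -B_size -cards_draws.
apply/subset_leq_card/subsetP=> A /imsetP[j jH ->].
by rewrite inE card_trace // eqxx andbT (subset_trans (trace_sub j)) ?subsetIr.
Qed.

Lemma sum_weight_le (A : {set clause V}) N : #|A| <= N ->
  (forall j, j \in A -> ~~ mostly_inside j /\ 32 * N <= 2 ^ u j) ->
  (\big[Rplus/0%R]_(j in A) weight j <= 1/8)%R.
Proof.
move=> AN wA; have [N0 | N_gt0] := posnP N.
  by move: AN; rewrite N0 leqn0 cards_eq0 => /eqP ->; rewrite big_set0; lra.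
have NR : (0 < INR N)%R by apply/lt_0_INR/ltP.
apply: Rle_trans (sum_le_card_mul (b := / (8 * INR N)) _) _ => [j jA | ].
  have [ncm le_u] := wA j jA; rewrite weight_not_mostly_inside //.
  have := INR_leq le_u; rewrite INR_muln INR_exp2n (_ : INR 32 = 32%R); last by simpl; lra.
  move=> /Rinv_le_contravar le_inv; have := le_inv ltac:(lra).
  have -> : (/ (8 * INR N) = 4 * / (32 * INR N))%R by field; lra.
  by rewrite /Rdiv; lra.
have := INR_leq AN; have -> : (1 / 8 = INR N * / (8 * INR N))%R by field; lra.
by move=> le_AN; apply: Rmult_le_compat_r => //; apply/Rlt_le/Rinv_0_lt_compat; lra.
Qed.

Lemma weight_sum_others c : c \in live ->
  (\big[Rplus/0%R]_(j in neighbours B live c :\: [set j | mostly_inside j]) weight j <= 1/4)%R.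
Proof.
move=> cl; set R := _ :\: _.
have R_F j : j \in R -> j \in F /\ ~~ mostly_inside j.
  by rewrite !inE => /andP[ncm /andP[/andP[jF _] _]].
rewrite (big_setID heavy) /=.
have heavy_part : (\big[Rplus/0%R]_(j in R :&: heavy) weight j <= 1/8)%R.
  apply: (sum_weight_le (N := 'C(k, s.+1))) => [|j /setIP[/R_F[jF ncm] _]].
    exact: leq_trans (subset_leq_card (subsetIr _ _)) card_heavy.
  split => //; rewrite -leq_sqr -expnM; apply: leq_trans binom_le _.
  by rewrite leq_pexp2l //; move: ncm (free_add_inside jF); rewrite /mostly_inside; lia.
have light_part : (\big[Rplus/0%R]_(j in R :\: heavy) weight j <= 1/8)%R.
  apply: (sum_weight_le (N := k * d)) => [|j /setDP[/R_F[jF ncm]]].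
    apply: leq_trans (card_neighbours (live_F cl)).
    exact/subset_leq_card/(subset_trans (subsetDl _ _) (subsetDl _ _)).
  rewrite inE jF /= -leqNgt => le_s; split => //; apply: leq_trans kd_le _.
  by rewrite leq_pexp2l //; move: le_s (free_add_inside jF); lia.
by apply: Rle_trans (Rplus_le_compat _ _ _ _ heavy_part light_part) _; lra.
Qed.

Lemma prod_mostly_inside c : c \in live ->
  ((if mostly_inside c then 1 else 1/3) <=
   \big[Rmult/1%R]_(j in neighbours B live c :&: [set j | mostly_inside j]) (1 - weight j))%R.
Proof.
move=> cl; have [-> | [j jN]] := set_0Vmem (neighbours B live c :&: [set j | mostly_inside j]).
  by rewrite big_set0; case: ifP; lra.
case/setIP: (jN) => /setIdP[jl /andP[jc _]]; rewrite inE => jm.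
have uniq_m i : i \in F -> mostly_inside i -> i = j := fun iF im =>
  mostly_inside_uniq iF (live_F jl) im jm.
have -> : neighbours B live c :&: [set j | mostly_inside j] = [set j].
  apply/setP=> i; rewrite inE; apply/idP/eqP => [iN | -> //].
  by case/setIP: iN => /setIdP[/live_F iF _]; rewrite inE; apply: uniq_m.
rewrite big_set1; have := weight_in jl.
case: ifPn => [cm | _]; last lra.
by move: jc; rewrite (uniq_m c (live_F cl) cm) eqxx.
Qed.

Lemma lll_condition_weight c : c \in live ->
  (1 <= 2 ^ u c * weight c * \big[Rmult/1%R]_(j in neighbours B live c) (1 - weight j))%R.
Proof.
move=> cl; rewrite (big_setID [set j | mostly_inside j]) /=.
have in01 (A : {set clause V}) : A \subset neighbours B live c ->
    (forall j, j \in A -> 0 <= weight j <= 1)%R.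
  move=> sA j /(subsetP sA); rewrite inE => /andP[/weight_in]; lra.
have others := prod_1B_ge (in01 _ (subsetDl _ [set j | mostly_inside j])).
have mostly := prod_mostly_inside cl.
have sum_others := weight_sum_others cl.
have -> : (2 ^ u c * weight c = if mostly_inside c then 4/3 else 4)%R.
  have u0 : (2 ^ u c <> 0)%R by apply: pow_nonzero; lra.
  by rewrite /weight; case: ifP => _; field.
move: mostly others sum_others.
set P1 := \big[Rmult/1%R]_(j in _ :&: _) _; set P2 := \big[Rmult/1%R]_(j in _ :\: _) _.
set W := \big[Rplus/0%R]_(j in _) _.
by case: ifP => _ mostly others sum_others; nra.
Qed.

Lemma inside_B_satisfied c a : c \in F -> vbl c \subset S -> violates B a -> ~~ violates c a.
Proof.
move=> cF cS vB; have eV : vbl c = S by apply/eqP; rewrite eqEcard cS B_size (F_size cF) /=.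
have [v ne] : exists v, c v != B v.
  case: (pickP (fun v => c v != B v)) => [v ne | eq]; first by exists v.
  suff cB : c = B by move: B_notin_F; rewrite -cB cF.
  by apply/ffunP=> v; apply/eqP/negbFE/eq.
move/setP/(_ v): eV; rewrite !inE => same.
apply/negP=> /forallP/(_ v) vc; move/forallP/(_ v): vB.
case: (c v) ne vc same => [b1|]; case: (B v) => [b2|] //= ne /eqP-> _ /eqP e.
by rewrite e eqxx in ne.
Qed.

Lemma satisfies_live a : violates B a -> satisfies F a = satisfies live a.
Proof.
move=> vB; apply/forall_inP/forall_inP => sat c cF; first exact/sat/live_F.
case cl: (c \in live); first exact: sat.
by apply: inside_B_satisfied => //; move: cl; rewrite inE cF /= => /negbFE.
Qed.

Lemma far_sub_live : far \subset live.
Proof.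
apply/subsetP=> c; rewrite !inE => /andP[cF dcS]; rewrite cF /=.
apply: contraTN dcS => cS; rewrite -setI_eq0 (setIidPl cS) -card_gt0 F_size //.
by move: s_le_k; lia.
Qed.

Lemma near_U_far : near :|: far = live.
Proof. by rewrite setUC -{1}(setIidPr far_sub_live) setID. Qed.

Lemma card_near : #|near| <= k * d.
Proof.
have sub : near \subset \bigcup_(v in S) [set c in F | v \in vbl c].
  apply/subsetP=> c /setDP[/live_F cF]; rewrite inE cF /= => /pred0Pn[v /andP[vc vS]].
  by apply/bigcupP; exists v => //; rewrite inE cF.
by apply: leq_trans (subset_leq_card sub) _; rewrite -B_size card_bigcup_le.
Qed.

Lemma card_satisfies_far :
  INR #|[set a | satisfies far a]| = (2 ^ k * mass B (satisfies far))%R.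
Proof.
pose sgB : assignment V := [ffun v => if B v is Some b then b else false].
have farS : invariant_off S [set a | satisfies far a].
  move=> a b ab; rewrite !inE; apply: eq_forallb_in => j; rewrite inE => /andP[_ djS].
  by congr negb; apply: violates_eq_on => v vj; apply: ab; rewrite (disjointFr djS vj).
rewrite -(card_cylinder sgB farS) B_size INR_muln INR_exp2n; congr (_ * INR #|pred_of_set _|)%R.
apply/setP=> a; rewrite !inE; congr andb; apply: eq_forallb => v.
by rewrite inE ffunE; case: (B v).
Qed.

Lemma prob_violate_ge : (0 < #|[set a | satisfies F a]|) ->
  (resilience_bound k <= prob_violate F B)%R.
Proof.
move=> satF.
have num : INR #|[set a | satisfies F a && violates B a]| = mass B (satisfies live).
  rewrite /mass; congr (INR #|pred_of_set _|); apply/setP=> a; rewrite !inE.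
  by case vB: (violates B a); rewrite ?andbF ?andbT // satisfies_live.
have den : (INR #|[set a | satisfies F a]| <= 2 ^ k * mass B (satisfies far))%R.
  rewrite -card_satisfies_far; apply/INR_leq/subset_leq_card/subsetP=> a.
  by rewrite !inE => /forall_inP sat; apply/forall_inP=> c /(subsetP far_sub_live) /live_F /sat.
have w01 c : c \in live -> (0 <= weight c <= 1)%R by move/weight_in; lra.
have dNF : [disjoint near & far] by rewrite /near disjoints_subset setDE subsetIr.
have := lll_mass_prod w01 lll_condition_weight (subsetDl live far) dNF far_sub_live.
rewrite near_U_far -num.
have d_le : d <= 2 ^ k.
  apply: leq_trans (leq_trans _ kd_le) (leq_pexp2l _ (leq_subr s k)) => //.
  by rewrite mulnA leq_pmull // muln_gt0; apply/andP; split => //; lia.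
have pnear : ((1/3) ^ (k * 2 ^ k) <= \big[Rmult/1%R]_(j in near) (1 - weight j))%R.
  apply: Rle_trans (pow_le_anti _ (leq_trans card_near (leq_mul (leqnn k) d_le))) _; first lra.
  by apply: prod_ge_pow => [|j /setDP[/weight_in]]; lra.
rewrite /prob_violate /resilience_bound.
move: pnear den; set q := ((1/3) ^ _)%R; set P := \big[Rmult/1%R]_(j in near) _.
set m := mass B _; set D := INR _; set N := INR _ => pnear den lll.
have D0 : (0 < D)%R by apply/lt_0_INR/ltP.
have t0 : (0 < 2 ^ k)%R by apply: pow_lt; lra.
have m0 : (0 <= m)%R := mass_ge0 _ _.
have q0 : (0 <= q)%R by apply: pow_le; lra.
apply: (Rmult_le_reg_r (2 ^ k * D)); first nra.
have -> : (q / 2 ^ k * (2 ^ k * D) = q * D)%R by field; lra.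
have -> : (N / D * (2 ^ k * D) = 2 ^ k * N)%R by field; lra.
nra.
Qed.

End Resilience.

Lemma kds_resilient (V : finType) k d s (F : cnf V) : is_kds_cnf k d s F ->
  s + 10 <= k -> 32 * (k * d) <= 2 ^ (k - s) -> (32 * 'C(k, s.+1)) ^ 2 <= 2 ^ (k - s) ->
  resilient k (resilience_bound k) F.
Proof.
move=> [F_size [F_degree F_overlap]] s_le kd_le binom_le B B_size B_notin.
have [satF0 | satF] := posnP #|[set a | satisfies F a]|.
  by left; rewrite /prob_violate satF0 /= Rdiv_0_r.
by right; apply: (prob_violate_ge F_size F_degree F_overlap).
Qed.

Lemma bin_le_expn n m : 'C(n, m) <= n ^ m.
Proof.
apply: leq_trans (leq_pmulr _ (fact_gt0 m)) _.
rewrite bin_ffact ffact_prod; apply: leq_trans (_ : \prod_(i < m) n <= _).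
  by apply: leq_prod => i _; apply: leq_subr.
by rewrite prod_nat_const card_ord.
Qed.

Lemma ln2_gt0 : (0 < ln 2)%R.
Proof. by rewrite -ln_1; apply: ln_increasing; lra. Qed.

(* Stdlib's [ln] is 0 on nonpositive arguments, so this also holds for n = 0. *)
Lemma log2_INR_ge0 n : (0 <= log2 (INR n))%R.
Proof.
have := ln2_gt0; rewrite /log2 /Rdiv => ln2; apply: Rmult_le_pos; last first.
  by apply/Rlt_le/Rinv_0_lt_compat.
case: n => [|n]; first by rewrite /ln; case: Rlt_dec => [h | _]; [exfalso; simpl in h | ]; lra.
have n1 : (1 <= INR n.+1)%R by apply: (INR_leq (m := 1)).
apply: Rnot_lt_le; rewrite -ln_1 => lt1.
by have := ln_lt_inv (INR n.+1) 1 ltac:(lra) ltac:(lra) lt1; lra.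
Qed.

Lemma log2_mul x y : (0 < x)%R -> (0 < y)%R -> log2 (x * y) = (log2 x + log2 y)%R.
Proof. by move=> x0 y0; rewrite /log2 ln_mult // /Rdiv Rmult_plus_distr_r. Qed.

Lemma log2_pow x n : (0 < x)%R -> log2 (x ^ n) = (INR n * log2 x)%R.
Proof. by move=> x0; rewrite /log2 ln_pow // /Rdiv Rmult_assoc. Qed.

Lemma log2_2 : log2 2 = 1%R.
Proof. by have := ln2_gt0; rewrite /log2 => ?; field; lra. Qed.

Lemma le_exp2n_of_log2 n e : 0 < n -> (log2 (INR n) <= INR e)%R -> n <= 2 ^ e.
Proof.
move=> n0 le_e; apply/leP/INR_le; rewrite INR_exp2n -Rpower_pow; last lra.
have n0R : (0 < INR n)%R by apply/lt_0_INR/ltP.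
have := ln2_gt0 => ln2.
have -> : INR n = Rpower 2 (log2 (INR n)).
  by rewrite /Rpower /log2 /Rdiv Rmult_assoc Rinv_l ?Rmult_1_r ?exp_ln //; lra.
by apply: Rle_Rpower; lra.
Qed.

Lemma kds_bounds_from_log2 k d s :
  (INR s + 10 + 2 * (INR s + 1) * log2 (INR k) + log2 (INR d) <= INR k)%R ->
  [/\ s + 10 <= k, 32 * (k * d) <= 2 ^ (k - s) & (32 * 'C(k, s.+1)) ^ 2 <= 2 ^ (k - s)].
Proof.
move=> k_ge; have L0 := log2_INR_ge0 k; have D0 := log2_INR_ge0 d; have s0 := pos_INR s.
have sL : (log2 (INR k) <= 2 * (INR s + 1) * log2 (INR k))%R by nra.
have s10 : s + 10 <= k.
  by apply/leP/INR_le; rewrite INR_addn (_ : INR 10 = 10%R); [nra | rewrite /=; lra].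
have k0 : (0 < INR k)%R by apply/lt_0_INR/ltP; lia.
have eks : INR (k - s) = (INR k - INR s)%R by rewrite subnE minus_INR //; apply/leP; lia.
have pos32 : (0 < INR 32)%R by rewrite /=; lra.
have log32 : log2 (INR 32) = 5%R.
  by rewrite (_ : INR 32 = 2 ^ 5)%R ?log2_pow ?log2_2 /=; lra.
split => //.
  have [-> | d0] := posnP d; first by rewrite muln0.
  have d0R : (0 < INR d)%R by apply/lt_0_INR/ltP.
  apply: le_exp2n_of_log2; first by rewrite !muln_gt0 d0 andbT; lia.
  by rewrite eks !INR_muln (log2_mul pos32 (Rmult_lt_0_compat _ _ k0 d0R)) log2_mul // log32; lra.
have pos_k := pow_lt _ s.+1 k0.
apply: leq_trans (_ : (32 * k ^ s.+1) ^ 2 <= _).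
  by rewrite leq_sqr leq_mul2l bin_le_expn orbT.
apply: le_exp2n_of_log2; first by rewrite expn_gt0 muln_gt0 expn_gt0; lia.
rewrite eks INR_expn INR_muln INR_expn log2_pow; last by apply: Rmult_lt_0_compat.
rewrite log2_mul // log2_pow // log32 (S_INR s) /=; lra.
Qed.

Lemma log2_le_Rpower a x : (0 < a)%R -> (0 < x)%R -> (log2 x <= Rpower x a / (a * ln 2))%R.
Proof.
move=> a0 x0; have ln2 := ln2_gt0.
have : (a * ln x <= Rpower x a)%R.
  have := exp_ineq1_le (ln (Rpower x a)).
  by rewrite exp_ln ?ln_Rpower; [lra | apply: exp_pos].
move=> le_a; rewrite /log2 (_ : Rpower x a / (a * ln 2) = Rpower x a / a / ln 2)%R; last first.
  by field; lra.
apply/Rmult_le_compat_r/(Rmult_le_reg_l a) => //; first by apply/Rlt_le/Rinv_0_lt_compat.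
by rewrite (_ : a * (Rpower x a / a) = Rpower x a)%R //; field; lra.
Qed.

Lemma cv_infty_Rpower a : (0 < a)%R -> cv_infty (fun n => Rpower (INR n) a).
Proof.
move=> a0 M; have [N ltN] := INR_unbounded (Rpower (Rmax M 1) (/ a)).
exists N => n /leP le_Nn.
have M1 : (0 < Rmax M 1)%R by have := Rmax_r M 1; lra.
apply: Rle_lt_trans (Rmax_l M 1) _.
have -> : Rmax M 1 = Rpower (Rpower (Rmax M 1) (/ a)) a.
  by rewrite Rpower_mult Rinv_l ?Rpower_1 //; lra.
apply: Rlt_Rpower_l => //; split; first exact: exp_pos.
exact: Rlt_le_trans ltN (INR_leq le_Nn).
Qed.

Lemma Un_cv_0_le (u v : nat -> R) (A : R) N0 :
  (forall n, N0 <= n -> (0 <= u n <= A * v n)%R) -> Un_cv v 0 -> Un_cv u 0.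
Proof.
move=> uv v0 eps eps0.
have A0 : (0 < Rabs A + 1)%R by have := Rabs_pos A; lra.
have [N vN] := v0 (eps / (Rabs A + 1))%R (Rdiv_lt_0_compat _ _ eps0 A0).
exists (maxn N N0) => n /leP; rewrite geq_max => /andP[nN nN0].
have [u0 le_uv] := uv n nN0.
have := vN n (elimT leP nN); rewrite /Rdist Rminus_0_r => lt_v.
have := Rmult_lt_compat_l _ _ _ A0 lt_v.
rewrite (_ : (Rabs A + 1) * (eps / (Rabs A + 1)) = eps)%R; last by field; lra.
move=> lt_Av; have : (A * v n <= Rabs A * Rabs (v n))%R.
  by rewrite -Rabs_mult; apply: RRle_abs.
by have := Rabs_pos (v n); rewrite /Rdist Rminus_0_r (Rabs_pos_eq (u n)) //; lra.
Qed.

Definition kds_overhead (eta : R) (k : nat) : R :=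
  (10 + 2 * (Rpower (INR k) (1 - eta) + 1) * log2 (INR k) + Rpower (INR k) (1 - eta))%R.

Lemma kds_overhead_le eta k : (0 < eta < 1)%R -> 0 < k ->
  (0 <= kds_overhead eta k / INR k
     <= (11 + 4 / (eta / 2 * ln 2)) * / Rpower (INR k) (eta / 2))%R.
Proof.
move=> eta01 k0; have K1 : (1 <= INR k)%R by apply: (INR_leq (m := 1)).
have L0 := log2_INR_ge0 k; have ln2 := ln2_gt0.
have Ly := @log2_le_Rpower (eta / 2)%R (INR k) ltac:(lra) ltac:(lra).
have Rpower_ge1 a : (0 <= a)%R -> (1 <= Rpower (INR k) a)%R.
  by move=> a0; rewrite -(Rpower_O (INR k)); [apply: Rle_Rpower | lra].
have eK : (Rpower (INR k) (1 - eta) * Rpower (INR k) (eta / 2) * Rpower (INR k) (eta / 2)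
           = INR k)%R.
  by rewrite -!Rpower_plus -[RHS](Rpower_1 (INR k)); [congr Rpower | ]; lra.
have y1 := Rpower_ge1 (eta / 2)%R ltac:(lra); have sg1 := Rpower_ge1 (1 - eta)%R ltac:(lra).
move: eK Ly y1 sg1 L0; rewrite /kds_overhead /Rdiv.
set y := Rpower _ (eta / 2)%R; set sg := Rpower _ (1 - eta)%R; set c := (/ (eta / 2 * ln 2))%R.
set L := log2 (INR k); move=> eK Ly y1 sg1 L0.
have c0 : (0 < c)%R by apply: Rinv_0_lt_compat; nra.
have le_f : (10 + 2 * (sg + 1) * L + sg <= (11 + 4 * c) * (sg * y))%R.
  have sy1 : (1 <= sg * y)%R by nra.
  have : (sg * L <= sg * (y * c))%R by apply: Rmult_le_compat_l; lra.
  have yc0 : (0 < y * c)%R by nra.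
  have : (y * c <= sg * (y * c))%R by nra.
  have : (sg <= sg * y)%R by nra.
  nra.
have -> : ((11 + 4 * c) * / y = (11 + 4 * c) * (sg * y) * / INR k)%R.
  by rewrite -eK; field; lra.
have K0 : (0 < / INR k)%R by apply: Rinv_0_lt_compat; lra.
split; last by apply: Rmult_le_compat_r; lra.
by apply: Rmult_le_pos; nra.
Qed.

Lemma kds_overhead_o eta : (0 < eta < 1)%R -> Un_cv (fun k => kds_overhead eta k / INR k)%R 0%R.
Proof.
move=> eta01; apply: (@Un_cv_0_le _ _ (11 + 4 / (eta / 2 * ln 2)) 1) => [k k0|].
  exact: kds_overhead_le.
by apply/cv_infty_cv_0/cv_infty_Rpower; lra.
Qed.

Lemma resilience_bound_gt0 k : (0 < resilience_bound k)%R.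
Proof. by apply: Rdiv_lt_0_compat; apply: pow_lt; lra. Qed.

Theorem lemma3p1 :
  forall eta : R, (0 < eta < 1)%R ->
  exists (f : nat -> R) (C : R),
    Un_cv (fun k => f k / INR k)%R 0%R /\
    exists theta : nat -> R, (forall k, 0 < theta k)%R /\
      forall (k d s : nat),
        (INR s <= Rpower (INR k) (1 - eta))%R ->
        (Rpower 2 (2 / eta) <= INR k)%R ->
        (INR k >= log2 (INR d) + f k + C)%R ->
        forall (V : finType) (F : cnf V),
          is_kds_cnf k d s F -> resilient k (theta k) F.
Proof.
move=> eta eta01; exists (kds_overhead eta), 0%R; split; first exact: kds_overhead_o.
exists resilience_bound; split; first exact: resilience_bound_gt0.
move=> k d s s_le _ k_ge V F F_kds.
have L0 := log2_INR_ge0 k.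
have [s10 kd_le binom_le] : [/\ s + 10 <= k, 32 * (k * d) <= 2 ^ (k - s)
                             & (32 * 'C(k, s.+1)) ^ 2 <= 2 ^ (k - s)].
  by apply: kds_bounds_from_log2; rewrite /kds_overhead in k_ge; nra.
exact: kds_resilient F_kds s10 kd_le binom_le.
Qed.
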